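(* Let $\mathcal C$ be a nondegenerate conic section in the projective plane, let $N\ge 2$ be an integer, and let $U,X_1,\dots,X_N,V,Y_N,\dots,Y_1$ be the consecutive vertices of a polygon $UX_1\dots X_NVY_N\dots Y_1$ inscribed in $\mathcal C$. Define the intersection points $A_j=X_jX_{j+1}\cap Y_jY_{j+1}$ for $j=1,\dots,N-1$, and \[ B = UX_1\cap Y_{2n}V,\quad C = UY_1\cap X_{2n}V \quad\text{if } N=2n, \] \[ B = UX_1\cap X_{2n+1}V,\quad C = UY_1\cap Y_{2n+1}V \quad\text{if } N=2n+1. \] If all of the points $A_1,\dots,A_{N-1},B,C$ except possibly one are collinear, then the remaining point lies on the same line as well.
   Context: $PQ$ denotes the line through points $P,Q$, and $\ell\cap m$ the intersection point of two lines. The points are assumed to be such that all the lines and intersection points above are well defined (i.e. in general position). *)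

From HB Require Import structures.
From mathcomp Require Import all_boot all_order all_algebra.
Set Implicit Arguments. Unset Strict Implicit. Unset Printing Implicit Defensive.
Import Order.TTheory GRing.Theory Num.Theory.
Local Open Scope ring_scope.

(* Projective plane P^2(R): a point (or a line) is represented by a nonzero
   row vector of R^3 (homogeneous coordinates), up to nonzero scalars. *)
Section Proj.
Variable R : numFieldType.
Implicit Types P Q L M : 'rV[R]_3.

Definition i0 : 'I_3 := @Ordinal 3 0 isT.
Definition i1 : 'I_3 := @Ordinal 3 1 isT.
Definition i2 : 'I_3 := @Ordinal 3 2 isT.

Definition crossv P Q : 'rV[R]_3 :=
  \row_(k < 3)
    (if k == i0 then P 0 i1 * Q 0 i2 - P 0 i2 * Q 0 i1
     else if k == i1 then P 0 i2 * Q 0 i0 - P 0 i0 * Q 0 i2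
     else P 0 i0 * Q 0 i1 - P 0 i1 * Q 0 i0).

Definition join P Q := crossv P Q.
Definition meet L M := crossv L M.

Definition incident P L : Prop := \sum_(k < 3) P 0 k * L 0 k = 0.

(* two nonzero vectors represent distinct projective points (resp. lines) *)
Definition pdistinct P Q : Prop := crossv P Q != 0.

Definition on_conic (C : 'M[R]_3) P : Prop := (P *m C *m P^T) 0 0 = 0.
Definition nondeg_conic (C : 'M[R]_3) : Prop := C^T = C /\ \det C != 0.

Definition polygon (N : nat) U V (X Y : nat -> 'rV[R]_3) : seq 'rV[R]_3 :=
  [:: U] ++ map X (iota 1 N) ++ [:: V] ++ rev (map Y (iota 1 N)).

Definition ptA (X Y : nat -> 'rV[R]_3) (j : nat) :=
  meet (join (X j) (X j.+1)) (join (Y j) (Y j.+1)).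

Definition linesB (N : nat) U V (X Y : nat -> 'rV[R]_3) :=
  (join U (X 1%N), if odd N then join (X N) V else join (Y N) V).
Definition linesC (N : nat) U V (X Y : nat -> 'rV[R]_3) :=
  (join U (Y 1%N), if odd N then join (Y N) V else join (X N) V).

Definition ptB N U V X Y := meet (linesB N U V X Y).1 (linesB N U V X Y).2.
Definition ptC N U V X Y := meet (linesC N U V X Y).1 (linesC N U V X Y).2.

(* the N+1 points A_1, ..., A_{N-1}, B, C, indexed by 0..N *)
Definition pts N U V X Y (j : nat) : 'rV[R]_3 :=
  if (j.+1 < N)%N then ptA X Y j.+1
  else if j == N.-1 then ptB N U V X Y else ptC N U V X Y.

Definition general_position N U V X Y : Prop :=
  (forall j, (1 <= j < N)%N ->
     pdistinct (join (X j) (X j.+1)) (join (Y j) (Y j.+1))) /\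
  pdistinct (linesB N U V X Y).1 (linesB N U V X Y).2 /\
  pdistinct (linesC N U V X Y).1 (linesC N U V X Y).2.

End Proj.

From HB Require Import structures.
From mathcomp Require Import all_boot all_order all_algebra ring zify.
Import Order.TTheory GRing.Theory Num.Theory.
Local Open Scope ring_scope.

(* Put U at infinity: in the frame [X_1, T, kappa U], where T is the pole of the chord U X_1,
   the conic becomes the parabola s |-> (1 : s : s^2) with U = (0 : 0 : 1).  Let x_k, y_k, v
   be the parameters of X_k, Y_k, V; then each of A_j, B, C lies on L iff an explicit
   polynomial in these parameters and the frame coordinates of L vanishes.
   Let r_k say that the chords X_1 W_k and Y_1 Z_k meet on L, where (Z_k, W_k) is (X_k, Y_k)
   for odd k and (Y_k, X_k) for even k; r_1 holds trivially.  Pascal's theorem for the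
   hexagons X_1 W_k Z_(k+1) Y_1 Z_k W_(k+1) and U X_1 W_N V Z_N Y_1 is a polynomial identity
   linking r_k, r_(k+1), A_k, resp. r_N, B, C, with coefficients that are nonzero because the
   vertices are distinct: in each of these triples any two conditions imply the third.
   Propagating r_k from both ends of the chain r_1, ..., r_N then yields the missing point. *)

Lemma mulf_eq0_iff {R : idomainType} {k e : R} : k != 0 -> k * e = 0 <-> e = 0.
Proof. by move=> kN; split=> [/eqP | ->]; rewrite ?mulr0 // mulf_eq0 (negbTE kN) => /eqP. Qed.

(** * Homogeneous coordinates *)

Section Vec3.
Context {R : numFieldType}.
Implicit Types (a b c d e f k : R) (P Q S L : 'rV[R]_3).

Definition vec3 a b c : 'rV[R]_3 :=
  \row_(k < 3) (if k == i0 then a else if k == i1 then b else c).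

Lemma ord3P (k : 'I_3) : [\/ k = i0, k = i1 | k = i2].
Proof.
by case: k => [[|[|[|//]]] lt_k]; [apply: Or31 | apply: Or32 | apply: Or33]; apply: val_inj.
Qed.

Lemma vec3_i0 a b c : vec3 a b c 0 i0 = a. Proof. by rewrite mxE. Qed.
Lemma vec3_i1 a b c : vec3 a b c 0 i1 = b. Proof. by rewrite mxE. Qed.
Lemma vec3_i2 a b c : vec3 a b c 0 i2 = c. Proof. by rewrite mxE. Qed.

Lemma vec3E P : P = vec3 (P 0 i0) (P 0 i1) (P 0 i2).
Proof. by apply/rowP => k; rewrite mxE; case: (ord3P k) => ->. Qed.

Lemma vec3_0 : vec3 0 0 0 = 0.
Proof. by apply/rowP => k; rewrite !mxE; case: (ord3P k) => ->. Qed.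

Lemma crossv_vec3 a b c d e f :
  crossv (vec3 a b c) (vec3 d e f) = vec3 (b * f - c * e) (c * d - a * f) (a * e - b * d).
Proof. by apply/rowP => k; rewrite !mxE; case: (ord3P k) => ->. Qed.

Lemma scale_vec3 k a b c : k *: vec3 a b c = vec3 (k * a) (k * b) (k * c).
Proof. by apply/rowP => j; rewrite !mxE; case: (ord3P j) => ->. Qed.

Lemma add_vec3 a b c d e f : vec3 a b c + vec3 d e f = vec3 (a + d) (b + e) (c + f).
Proof. by apply/rowP => j; rewrite !mxE; case: (ord3P j) => ->. Qed.

Definition dotv P Q := P 0 i0 * Q 0 i0 + P 0 i1 * Q 0 i1 + P 0 i2 * Q 0 i2.

Lemma dotv_vec3 a b c d e f : dotv (vec3 a b c) (vec3 d e f) = a * d + b * e + c * f.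
Proof. by rewrite /dotv !(vec3_i0, vec3_i1, vec3_i2). Qed.

Lemma sum_ord3 (F : 'I_3 -> R) : \sum_(k < 3) F k = F i0 + F i1 + F i2.
Proof. by rewrite !big_ord_recr big_ord0 /= add0r; congr (F _ + F _ + F _); apply: val_inj. Qed.

Lemma incidentE P L : incident P L <-> dotv P L = 0.
Proof. by rewrite /incident sum_ord3. Qed.

Definition tripv P Q S := dotv P (crossv Q S).

Definition frame (T0 T1 T2 P : 'rV[R]_3) := P 0 i0 *: T0 + P 0 i1 *: T1 + P 0 i2 *: T2.

Lemma frameZ (T0 T1 T2 : 'rV[R]_3) k P : frame T0 T1 T2 (k *: P) = k *: frame T0 T1 T2 P.
Proof. by rewrite /frame !mxE !scalerDr !scalerA. Qed.

Definition parab (s : R) := vec3 1 s (s ^+ 2).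

End Vec3.

Ltac vec3_simpl :=
  rewrite ?(crossv_vec3, scale_vec3, add_vec3, dotv_vec3, vec3_i0, vec3_i1, vec3_i2).

Section Vec3Identities.
Context {R : numFieldType}.
Implicit Types (k : R) (P Q S W : 'rV[R]_3).

Lemma dotvC P Q : dotv P Q = dotv Q P.
Proof. by rewrite /dotv; ring. Qed.

Lemma crossvZl k P Q : crossv (k *: P) Q = k *: crossv P Q.
Proof. by rewrite (vec3E P) (vec3E Q); vec3_simpl; congr vec3; ring. Qed.

Lemma crossvZr k P Q : crossv P (k *: Q) = k *: crossv P Q.
Proof. by rewrite (vec3E P) (vec3E Q); vec3_simpl; congr vec3; ring. Qed.

Lemma crossvv P : crossv P P = 0.
Proof. by rewrite (vec3E P); vec3_simpl; rewrite -vec3_0; congr vec3; ring. Qed.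

Lemma dotv_crossvl P Q : dotv (crossv P Q) P = 0.
Proof. by rewrite (vec3E P) (vec3E Q); vec3_simpl; ring. Qed.

Lemma dotv_crossvr P Q : dotv (crossv P Q) Q = 0.
Proof. by rewrite (vec3E P) (vec3E Q); vec3_simpl; ring. Qed.

Lemma tripvC P Q S : tripv Q P S = - tripv P Q S.
Proof. by rewrite /tripv (vec3E P) (vec3E Q) (vec3E S); vec3_simpl; ring. Qed.

Lemma tripvZr k P Q S : tripv P Q (k *: S) = k * tripv P Q S.
Proof. by rewrite /tripv (vec3E P) (vec3E Q) (vec3E S); vec3_simpl; ring. Qed.

Lemma cramer3 P Q S W :
  tripv P Q S *: W = tripv W Q S *: P + tripv P W S *: Q + tripv P Q W *: S.
Proof.
by rewrite /tripv (vec3E P) (vec3E Q) (vec3E S) (vec3E W); vec3_simpl; congr vec3; ring.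
Qed.

Lemma crossv_eq0 P Q : (forall S, tripv S P Q = 0) -> crossv P Q = 0.
Proof.
move=> tripv0; rewrite [crossv P Q]vec3E -vec3_0.
have := tripv0 (vec3 1 0 0); have := tripv0 (vec3 0 1 0); have := tripv0 (vec3 0 0 1).
by rewrite /tripv [crossv P Q]vec3E; vec3_simpl; rewrite !mul0r !mul1r ?add0r ?addr0 => -> -> ->.
Qed.

End Vec3Identities.

(** * Conics *)

Section Conic.
Context {R : numFieldType}.
Implicit Types (C : 'M[R]_3) (k : R) (p w P Q S U X : 'rV[R]_3).

Lemma det_mx22 (A : 'M[R]_2) : \det A = A 0 0 * A 1 1 - A 0 1 * A 1 0.
Proof.
rewrite (expand_det_row _ 0) !big_ord_recr big_ord0 /= add0r /cofactor !det_mx11 !mxE /=.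
rewrite !expr0 !expr1 mul1r mulN1r mulrN; congr (A _ _ * A _ _ - A _ _ * A _ _);
  exact: val_inj.
Qed.

Lemma det_mx33 C : \det C =
  C i0 i0 * (C i1 i1 * C i2 i2 - C i1 i2 * C i2 i1)
  - C i0 i1 * (C i1 i0 * C i2 i2 - C i1 i2 * C i2 i0)
  + C i0 i2 * (C i1 i0 * C i2 i1 - C i1 i1 * C i2 i0).
Proof.
rewrite (expand_det_row _ i0) sum_ord3 /cofactor !det_mx22 !mxE /=.
have [l00 l01] : lift i0 0 = i1 /\ lift i0 1 = i2 by split; apply: val_inj.
have [l10 l11] : lift i1 0 = i0 /\ lift i1 1 = i2 by split; apply: val_inj.
have [l20 l21] : lift i2 0 = i0 /\ lift i2 1 = i1 by split; apply: val_inj.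
rewrite l00 l01 l10 l11 l20 l21 !expr0 !expr1 sqrrN expr1n; ring.
Qed.

Definition bform C P Q := (P *m C *m Q^T) 0 0.

Lemma bformE C P Q : bform C P Q =
    P 0 i0 * (C i0 i0 * Q 0 i0 + C i0 i1 * Q 0 i1 + C i0 i2 * Q 0 i2)
  + P 0 i1 * (C i1 i0 * Q 0 i0 + C i1 i1 * Q 0 i1 + C i1 i2 * Q 0 i2)
  + P 0 i2 * (C i2 i0 * Q 0 i0 + C i2 i1 * Q 0 i1 + C i2 i2 * Q 0 i2).
Proof. by rewrite /bform !mxE sum_ord3 !mxE !sum_ord3; ring. Qed.

Lemma trmx3_sym C : C^T = C -> [/\ C i1 i0 = C i0 i1, C i2 i0 = C i0 i2 & C i2 i1 = C i1 i2].
Proof. by move=> symC; split; rewrite -[in LHS]symC mxE. Qed.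

Lemma bformC C P Q : C^T = C -> bform C P Q = bform C Q P.
Proof. by case/trmx3_sym => s10 s20 s21; rewrite !bformE s10 s20 s21; ring. Qed.

Lemma bformZl C k P Q : bform C (k *: P) Q = k * bform C P Q.
Proof. by rewrite !bformE !mxE; ring. Qed.

Lemma bformZr C k P Q : bform C P (k *: Q) = k * bform C P Q.
Proof. by rewrite !bformE !mxE; ring. Qed.

Lemma bform_frame C (t0 t1 t2 : 'rV[R]_3) p : C^T = C ->
  bform C (frame t0 t1 t2 p) (frame t0 t1 t2 p) =
    p 0 i0 ^+ 2 * bform C t0 t0 + p 0 i1 ^+ 2 * bform C t1 t1 + p 0 i2 ^+ 2 * bform C t2 t2
  + 2 * (p 0 i0 * p 0 i1 * bform C t0 t1 + p 0 i0 * p 0 i2 * bform C t0 t2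
         + p 0 i1 * p 0 i2 * bform C t1 t2).
Proof. by case/trmx3_sym => s10 s20 s21; rewrite /frame !bformE !mxE s10 s20 s21; ring. Qed.

(* [adjv C w] is [w *m \adj C], written out. *)
Definition adjv C w : 'rV[R]_3 :=
  vec3 (w 0 i0 * (C i1 i1 * C i2 i2 - C i1 i2 * C i2 i1)
        + w 0 i1 * (C i1 i2 * C i2 i0 - C i1 i0 * C i2 i2)
        + w 0 i2 * (C i1 i0 * C i2 i1 - C i1 i1 * C i2 i0))
       (w 0 i0 * (C i0 i2 * C i2 i1 - C i0 i1 * C i2 i2)
        + w 0 i1 * (C i0 i0 * C i2 i2 - C i0 i2 * C i2 i0)
        + w 0 i2 * (C i0 i1 * C i2 i0 - C i0 i0 * C i2 i1))
       (w 0 i0 * (C i0 i1 * C i1 i2 - C i0 i2 * C i1 i1)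
        + w 0 i1 * (C i0 i2 * C i1 i0 - C i0 i0 * C i1 i2)
        + w 0 i2 * (C i0 i0 * C i1 i1 - C i0 i1 * C i1 i0)).

Lemma bform_adjv C w P : bform C (adjv C w) P = \det C * dotv w P.
Proof. by rewrite bformE det_mx33 /adjv /dotv; vec3_simpl; ring. Qed.

(* The pole of the chord [X U]: the point where the tangents at [X] and [U] meet. *)
Definition chord_pole C X U := adjv C (crossv X U).

Lemma tripv_chord_pole C X U : C^T = C ->
  tripv X (chord_pole C X U) U = bform C X U ^+ 2 - bform C X X * bform C U U.
Proof.
case/trmx3_sym => s10 s20 s21.
rewrite /tripv /chord_pole /adjv !bformE (vec3E X) (vec3E U); vec3_simpl.
by rewrite s10 s20 s21; ring.
Qed.

Definition symdet3 (a b c d e f : R) :=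
  a * (d * f - e * e) - b * (b * f - e * c) + c * (b * e - d * c).

Lemma tripv_sqr_det C P Q S : C^T = C ->
  tripv P Q S ^+ 2 * \det C = symdet3 (bform C P P) (bform C P Q) (bform C P S)
                                     (bform C Q Q) (bform C Q S) (bform C S S).
Proof.
case/trmx3_sym => s10 s20 s21.
rewrite /tripv det_mx33 !bformE (vec3E P) (vec3E Q) (vec3E S); vec3_simpl.
by rewrite s10 s20 s21 /symdet3; ring.
Qed.

End Conic.

Section ConicFrame.
Context {R : numFieldType}.
Variables (C : 'M[R]_3) (U X : 'rV[R]_3).

(* Scaling [U] by [conic_kappa] turns the conic into the parabola [p1^2 = p0 p2]
   in the frame [X, chord_pole C X U, conic_kappa *: U]. *)
Definition conic_kappa := \det C * bform C X U / 2.
Definition conic_frame := frame X (chord_pole C X U) (conic_kappa *: U).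
Definition conic_coords W :=
  let D := tripv X (chord_pole C X U) U in
  vec3 (tripv W (chord_pole C X U) U / D) (tripv X W U / D)
       (tripv X (chord_pole C X U) W / (conic_kappa * D)).
Definition conic_scale W := conic_coords W 0 i0.
Definition conic_par W := conic_coords W 0 i1 / conic_coords W 0 i0.

Hypotheses (C_sym : C^T = C) (C_nondeg : \det C != 0).
Hypotheses (U_on : bform C U U = 0) (X_on : bform C X X = 0) (UX : crossv U X != 0).

Let T := chord_pole C X U.

Lemma bform_chord_neq0 : bform C X U != 0.
Proof.
apply/negP => /eqP XU0; move/eqP: UX; apply; apply: crossv_eq0 => S.
have := tripv_sqr_det C S U X C_sym.
rewrite U_on X_on (bformC _ U) // XU0 /symdet3 !(mul0r, mulr0, subrr, addr0) => /eqP.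
by rewrite mulf_eq0 (negbTE C_nondeg) orbF expf_eq0 => /andP [_ /eqP].
Qed.

Lemma conic_kappa_neq0 : conic_kappa != 0.
Proof. by rewrite /conic_kappa !mulf_neq0 ?invr_neq0 ?pnatr_eq0 ?bform_chord_neq0. Qed.

Lemma tripv_chord : tripv X T U = bform C X U ^+ 2.
Proof. by rewrite tripv_chord_pole // X_on mul0r subr0. Qed.

Lemma tripv_conic_frame_neq0 : tripv X T (conic_kappa *: U) != 0.
Proof. by rewrite tripvZr tripv_chord mulf_neq0 ?conic_kappa_neq0 ?expf_neq0 ?bform_chord_neq0. Qed.

Lemma bform_conic_frame p : bform C (conic_frame p) (conic_frame p) =
  \det C * bform C X U ^+ 2 * (p 0 i0 * p 0 i2 - p 0 i1 ^+ 2).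
Proof.
have poleX : bform C X T = 0 by rewrite bformC // bform_adjv dotv_crossvl mulr0.
have poleU : bform C T U = 0 by rewrite bform_adjv dotv_crossvr mulr0.
have poleT : bform C T T = - (\det C * tripv X T U).
  by rewrite {1}/T bform_adjv dotvC -/(tripv T X U) tripvC mulrN.
rewrite bform_frame // !(bformZl, bformZr) X_on U_on poleX poleU poleT tripv_chord.
by rewrite /conic_kappa; field.
Qed.

Lemma conic_coordsK W : conic_frame (conic_coords W) = W.
Proof.
have DN : tripv X T U != 0 by rewrite tripv_chord expf_neq0 ?bform_chord_neq0.
apply: (scalerI DN); rewrite [RHS]cramer3 /conic_frame /frame /conic_coords -/T.
rewrite !(vec3_i0, vec3_i1, vec3_i2) !scalerDr !scalerA.
by congr (_ *: _ + _ *: _ + _ *: _); field; rewrite ?DN ?conic_kappa_neq0.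
Qed.

Lemma conic_param W : bform C W W = 0 -> crossv U W != 0 ->
  conic_scale W != 0 /\ W = conic_scale W *: conic_frame (parab (conic_par W)).
Proof.
move=> W_on UW; rewrite /conic_scale /conic_par.
set p := conic_coords W; rewrite -(conic_coordsK W) -/p in W_on UW *; clearbody p.
have p_on : p 0 i0 * p 0 i2 = p 0 i1 ^+ 2.
  have k0 : \det C * bform C X U ^+ 2 != 0.
    by rewrite mulf_neq0 ?expf_neq0 ?bform_chord_neq0.
  by move: W_on; rewrite bform_conic_frame => /(mulf_eq0_iff k0)/eqP; rewrite subr_eq0 => /eqP.
have p0N : p 0 i0 != 0.
  apply: contraNneq UW => p00; move: p_on; rewrite p00 mul0r => /esym/eqP.
  rewrite expf_eq0 /= => /eqP p10.
  rewrite /conic_frame /frame p00 p10 !scale0r !add0r scalerA crossvZr crossvv.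
  by rewrite scaler0.
split=> //; rewrite -frameZ; congr conic_frame.
rewrite [LHS]vec3E /parab; vec3_simpl; congr vec3; first by rewrite mulr1.
  by rewrite mulrC divfK.
by rewrite expr_div_n -p_on; field.
Qed.

Lemma conic_frame_base : U = conic_kappa^-1 *: conic_frame (vec3 0 0 1).
Proof.
rewrite /conic_frame /frame !(vec3_i0, vec3_i1, vec3_i2) !scale0r !add0r scale1r scalerA.
by rewrite mulVf ?conic_kappa_neq0 // scale1r.
Qed.

End ConicFrame.

(** * Chords of the parabola *)

Section ParabolaChords.
Context {R : numFieldType}.
Implicit Types a b c k p q z w v : R.

Definition chords_meet a b c z z' w w' :=
  a * (- (z + z') + (w + w')) - b * (z * z' - w * w')
  + c * (- (z * z') * (w + w') + w * w' * (z + z')).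

Definition chords_meet_inf a b c p z v := a + b * p + c * (p * (z + v) - z * v).

Lemma meet_join_parab a b c (l1 l2 l3 l4 s1 s2 s3 s4 : R) :
  dotv (meet (join (l1 *: parab s1) (l2 *: parab s2)) (join (l3 *: parab s3) (l4 *: parab s4)))
       (vec3 a b c) =
  l1 * l2 * l3 * l4 * (s2 - s1) * (s4 - s3) * chords_meet a b c s1 s2 s3 s4.
Proof. by rewrite /meet /join /parab /chords_meet; vec3_simpl; ring. Qed.

Lemma meet_join_parab_inf a b c k (l1 l2 l3 s1 s2 s3 : R) :
  dotv (meet (join (k *: vec3 0 0 1) (l1 *: parab s1)) (join (l2 *: parab s2) (l3 *: parab s3)))
       (vec3 a b c) =
  k * l1 * l2 * l3 * (s3 - s2) * chords_meet_inf a b c s1 s2 s3.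
Proof. by rewrite /meet /join /parab /chords_meet_inf; vec3_simpl; ring. Qed.

Lemma chords_meetC a b c z z' w w' :
  chords_meet a b c w w' z z' = - chords_meet a b c z z' w w'.
Proof. by rewrite /chords_meet; ring. Qed.

Lemma chords_meet_same a b c z z' : chords_meet a b c z z' z' z = 0.
Proof. by rewrite /chords_meet; ring. Qed.

(* Pascal's theorem for the hexagon p w w' q z z', resp. (0 : 0 : 1) p w v z q. *)
Lemma pascal_chords a b c p q z z' w w' :
  (q - p) * chords_meet a b c z z' w w' + (z' - w') * chords_meet a b c p w q z
  + (z - w) * chords_meet a b c p z' q w' = 0.
Proof. by rewrite /chords_meet; ring. Qed.

Lemma pascal_chords_inf a b c p q z w v :
  chords_meet a b c p w q z + (w - q) * chords_meet_inf a b c p z v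
  + (p - z) * chords_meet_inf a b c q w v = 0.
Proof. by rewrite /chords_meet /chords_meet_inf; ring. Qed.

End ParabolaChords.

Section FrameIncidence.
Context {R : numFieldType}.
Implicit Types (a b c k : R).
Variables (T0 T1 T2 L : 'rV[R]_3).

Definition frame_line := vec3 (dotv T0 L) (dotv T1 L) (dotv T2 L).

Lemma frame_meet_join (p1 p2 p3 p4 : 'rV[R]_3) :
  dotv (meet (join (frame T0 T1 T2 p1) (frame T0 T1 T2 p2))
             (join (frame T0 T1 T2 p3) (frame T0 T1 T2 p4))) L =
  tripv T0 T1 T2 * dotv (meet (join p1 p2) (join p3 p4)) frame_line.
Proof.
rewrite /meet /join /frame /frame_line /tripv (vec3E T0) (vec3E T1) (vec3E T2) (vec3E L).
by rewrite (vec3E p1) (vec3E p2) (vec3E p3) (vec3E p4); vec3_simpl; ring.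
Qed.

Hypothesis frame_free : tripv T0 T1 T2 != 0.

Lemma incident_meet_chords (l1 l2 l3 l4 s1 s2 s3 s4 : R) :
  l1 != 0 -> l2 != 0 -> l3 != 0 -> l4 != 0 -> s1 != s2 -> s3 != s4 ->
  incident (meet (join (l1 *: frame T0 T1 T2 (parab s1)) (l2 *: frame T0 T1 T2 (parab s2)))
                 (join (l3 *: frame T0 T1 T2 (parab s3)) (l4 *: frame T0 T1 T2 (parab s4)))) L
  <-> chords_meet (dotv T0 L) (dotv T1 L) (dotv T2 L) s1 s2 s3 s4 = 0.
Proof.
move=> *; rewrite incidentE -!frameZ frame_meet_join meet_join_parab !mulrA.
by apply: mulf_eq0_iff; rewrite !mulf_neq0 // subr_eq0 eq_sym.
Qed.

Lemma incident_meet_chords_inf k (l1 l2 l3 s1 s2 s3 : R) :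
  k != 0 -> l1 != 0 -> l2 != 0 -> l3 != 0 -> s2 != s3 ->
  incident (meet (join (k *: frame T0 T1 T2 (vec3 0 0 1)) (l1 *: frame T0 T1 T2 (parab s1)))
                 (join (l2 *: frame T0 T1 T2 (parab s2)) (l3 *: frame T0 T1 T2 (parab s3)))) L
  <-> chords_meet_inf (dotv T0 L) (dotv T1 L) (dotv T2 L) s1 s2 s3 = 0.
Proof.
move=> *; rewrite incidentE -!frameZ frame_meet_join meet_join_parab_inf !mulrA.
by apply: mulf_eq0_iff; rewrite !mulf_neq0 // subr_eq0 eq_sym.
Qed.

End FrameIncidence.

(** * The chain argument *)

Definition two_of_three (P Q S : Prop) := [/\ P -> Q -> S, Q -> S -> P & S -> P -> Q].

Lemma two_of_three_iff {P Q S P' Q' S' : Prop} :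
  P <-> P' -> Q <-> Q' -> S <-> S' -> two_of_three P Q S -> two_of_three P' Q' S'.
Proof. by move=> [? ?] [? ?] [? ?] [? ? ?]; split; auto. Qed.

Section Chain.
Variables (n : nat) (r e : nat -> Prop).
Hypotheses (n_gt0 : (0 < n)%N) (r0 : r 0%N).
Hypothesis link : forall j, (j.+1 < n)%N -> two_of_three (r j) (r j.+1) (e j).
Hypothesis link_last : two_of_three (r n.-1) (e n.-1) (e n).

Lemma chain_forward j : (j < n)%N -> (forall k, (k < j)%N -> e k) -> r j.
Proof.
elim: j => // j IH lt_jn ek; have [_ _ h] := link j lt_jn.
by apply: h; [apply: ek | apply: IH => [|k lt_kj]; [lia | apply: ek; lia]].
Qed.

Lemma chain_backward d j : (j + d = n.-1)%N ->
  (forall k, (j <= k < n.-1)%N -> e k) -> r n.-1 -> r j.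
Proof.
elim: d j => [|d IH] j def_j ek rn; first by rewrite addn0 in def_j; rewrite def_j.
have [_ h _] : two_of_three (r j) (r j.+1) (e j) by apply: link; lia.
apply: h; last by apply: ek; lia.
by apply: IH rn => [|k lt_k]; [lia | apply: ek; lia].
Qed.

Lemma chain_closure i : (i <= n)%N -> (forall j, (j <= n)%N -> j != i -> e j) -> e i.
Proof.
move=> le_in ej; have [rB_C BC_r Cr_B] := link_last.
have rn : (forall k, (k < n.-1)%N -> e k) -> r n.-1.
  by move=> ek; apply: chain_forward => //; lia.
have [eq_in | ne_in] := eqVneq i n.
  by rewrite eq_in; apply: rB_C; [apply: rn => k lt_k | ]; apply: ej; lia.
have [eq_in1 | ne_in1] := eqVneq i n.-1.
  by rewrite eq_in1; apply: Cr_B; [ | apply: rn => k lt_k]; apply: ej; lia.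
have [h _ _] : two_of_three (r i) (r i.+1) (e i) by apply: link; lia.
apply: h.
- apply: chain_forward => [|k lt_ki]; [lia | apply: ej; lia].
- apply: (chain_backward (n.-1 - i.+1)) => [|k lt_k|]; first lia.
    by apply: ej; lia.
  by apply: BC_r; apply: ej; lia.
Qed.

End Chain.

Section DiagonalChords.
Context {R : numFieldType}.

Lemma two_of_three_lin {u1 u2 u3 e1 e2 e3 : R} :
  u1 != 0 -> u2 != 0 -> u3 != 0 -> u1 * e1 + u2 * e2 + u3 * e3 = 0 ->
  two_of_three (e1 = 0) (e2 = 0) (e3 = 0).
Proof.
move=> u1N u2N u3N sum0; split=> [e10 e20 | e20 e30 | e30 e10]; apply/eqP.
- by rewrite -(mulrI_eq0 _ (mulfI u3N)) -sum0 e10 e20 !mulr0 !add0r.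
- by rewrite -(mulrI_eq0 _ (mulfI u1N)) -sum0 e20 e30 !mulr0 !addr0.
- by rewrite -(mulrI_eq0 _ (mulfI u2N)) -sum0 e10 e30 !mulr0 addr0 add0r.
Qed.

Variables (x y : nat -> R) (a b c v : R).

Definition zpar k := if odd k then x k else y k.
Definition wpar k := if odd k then y k else x k.

Definition diag_chords k := chords_meet a b c (x 1) (wpar k) (y 1) (zpar k).

Lemma diag_chords1 : diag_chords 1 = 0.
Proof. exact: chords_meet_same. Qed.

Lemma diag_chords_step k : x 1 != y 1 -> x k != y k -> x k.+1 != y k.+1 ->
  two_of_three (diag_chords k = 0) (diag_chords k.+1 = 0)
               (chords_meet a b c (x k) (x k.+1) (y k) (y k.+1) = 0).
Proof.
move=> d1 dk dk1; rewrite /diag_chords /zpar /wpar /=.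
have subN (s t : R) : s != t -> s - t != 0 by rewrite subr_eq0.
case: (odd k) => /=.
  apply: (two_of_three_lin (subN _ _ dk1) (subN _ _ dk) (subN (y 1) (x 1) _)).
    by rewrite eq_sym.
  by rewrite -(pascal_chords a b c (x 1) (y 1) (x k) (x k.+1) (y k) (y k.+1)); ring.
apply: (two_of_three_lin (subN (y k.+1) (x k.+1) _) (subN (y k) (x k) _) (subN _ _ d1));
  rewrite 1?eq_sym //.
rewrite -(pascal_chords a b c (x 1) (y 1) (y k) (y k.+1) (x k) (x k.+1))
  (chords_meetC a b c (x k) (x k.+1) (y k) (y k.+1)).
ring.
Qed.

Lemma diag_chords_last N : x 1 != zpar N -> y 1 != wpar N ->
  two_of_three (diag_chords N = 0) (chords_meet_inf a b c (x 1) (zpar N) v = 0)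
               (chords_meet_inf a b c (y 1) (wpar N) v = 0).
Proof.
move=> dx dy.
have dy' : wpar N - y 1 != 0 by rewrite subr_eq0 eq_sym.
have dx' : x 1 - zpar N != 0 by rewrite subr_eq0.
apply: (two_of_three_lin (oner_neq0 R) dy' dx').
by rewrite mul1r pascal_chords_inf.
Qed.

End DiagonalChords.

(** * The inscribed polygon *)

Section PolygonVertices.
Context {R : numFieldType}.
Variables (N : nat) (U V : 'rV[R]_3) (X Y : nat -> 'rV[R]_3).
Local Notation poly := (polygon N U V X Y).

Definition idxY k := (N.+2 + (N - k))%N.

Lemma size_polygon : size poly = (N + N).+2.
Proof. by rewrite /polygon /= !size_cat /= size_rev !size_map size_iota addnS. Qed.

Lemma nth_polygon_X k : (0 < k <= N)%N -> poly`_k = X k.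
Proof.
case: k => [//|k] /andP [_ le_kN].
by rewrite /polygon /= nth_cat size_map size_iota le_kN (nth_map 0%N) ?nth_iota ?size_iota.
Qed.

Lemma nth_polygon_V : poly`_N.+1 = V.
Proof. by rewrite /polygon /= nth_cat size_map size_iota ltnn subnn. Qed.

Lemma nth_polygon_Y k : (0 < k <= N)%N -> poly`_(idxY k) = Y k.
Proof.
move=> /andP [k_gt0 le_kN]; rewrite /polygon /idxY /= nth_cat size_map size_iota.
rewrite ifF; last by lia.
rewrite (_ : (N.+1 + (N - k) - N = (N - k).+1)%N) /=; last by lia.
rewrite nth_rev size_map size_iota; last by lia.
by rewrite (nth_map 0%N) ?size_iota ?nth_iota; [congr Y | |]; lia.
Qed.

End PolygonVertices.

Section InscribedPolygon.
Context {R : numFieldType}.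
Variables (C : 'M[R]_3) (N : nat) (U V : 'rV[R]_3) (X Y : nat -> 'rV[R]_3) (L : 'rV[R]_3).
Hypotheses (C_nondeg : nondeg_conic C) (N_ge2 : (2 <= N)%N).
Hypothesis vertices_on : forall P, P \in polygon N U V X Y -> P != 0 /\ on_conic C P.
Hypothesis vertices_distinct : forall i j, (i < j < size (polygon N U V X Y))%N ->
  pdistinct (nth 0 (polygon N U V X Y) i) (nth 0 (polygon N U V X Y) j).

Local Notation poly := (polygon N U V X Y).
Local Notation vertex n := (0 < n < (N + N).+2)%N.

Let par n := conic_par C U (X 1) poly`_n.
Let wt n := conic_scale C U (X 1) poly`_n.
Let a := dotv (X 1) L.
Let b := dotv (chord_pole C (X 1) U) L.
Let c := dotv (conic_kappa C U (X 1) *: U) L.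

Lemma vertex_on n : (n < (N + N).+2)%N -> bform C poly`_n poly`_n = 0.
Proof.
move=> lt_n; have lt_sz : (n < size poly)%N by rewrite size_polygon.
by have [_ ?] := vertices_on _ (mem_nth 0 lt_sz).
Qed.

Lemma conic_frame_hyps : [/\ C^T = C, \det C != 0, bform C U U = 0,
  bform C (X 1) (X 1) = 0 & crossv U (X 1) != 0].
Proof.
have [C_sym detC] := C_nondeg.
have X1 : poly`_1 = X 1 by rewrite nth_polygon_X //; lia.
split=> //; first exact: (vertex_on 0).
  by rewrite -X1 vertex_on.
by have := vertices_distinct 0 1; rewrite -X1; apply; rewrite size_polygon.
Qed.

Lemma vertex_param n : vertex n ->
  wt n != 0 /\ poly`_n = wt n *: conic_frame C U (X 1) (parab (par n)).
Proof.
move=> /andP [n_gt0 lt_n]; have [? ? ? ? ?] := conic_frame_hyps.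
apply: conic_param => //; first exact: vertex_on.
by have := vertices_distinct 0 n; apply; rewrite size_polygon n_gt0.
Qed.

Lemma vertex_par_inj n m : vertex n -> vertex m -> n != m -> par n != par m.
Proof.
wlog lt_nm : n m / (n < m)%N => [hwlog vn vm|vn vm _].
  have [lt_nm | lt_mn | -> //] := ltngtP n m => _.
    by apply: hwlog => //; rewrite ltn_eqF.
  by rewrite eq_sym; apply: hwlog => //; rewrite ltn_eqF.
have : (n < m < size poly)%N by rewrite size_polygon lt_nm; case/andP: vm.
move/vertices_distinct; apply: contraNneq => eq_par.
have [_ ->] := vertex_param n vn; have [_ ->] := vertex_param m vm.
by rewrite eq_par crossvZl crossvZr crossvv !scaler0.
Qed.

Lemma incident_vertex_chords n1 n2 n3 n4 :
  vertex n1 -> vertex n2 -> vertex n3 -> vertex n4 -> n1 != n2 -> n3 != n4 ->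
  incident (meet (join poly`_n1 poly`_n2) (join poly`_n3 poly`_n4)) L <->
  chords_meet a b c (par n1) (par n2) (par n3) (par n4) = 0.
Proof.
move=> v1 v2 v3 v4 n12 n34; have [? ? ? ? ?] := conic_frame_hyps.
have [s1 ->] := vertex_param n1 v1; have [s2 ->] := vertex_param n2 v2.
have [s3 ->] := vertex_param n3 v3; have [s4 ->] := vertex_param n4 v4.
by apply: incident_meet_chords; rewrite // ?tripv_conic_frame_neq0 ?vertex_par_inj.
Qed.

Lemma incident_vertex_chords_inf n1 n2 n3 : vertex n1 -> vertex n2 -> vertex n3 -> n2 != n3 ->
  incident (meet (join U poly`_n1) (join poly`_n2 poly`_n3)) L <->
  chords_meet_inf a b c (par n1) (par n2) (par n3) = 0.
Proof.
move=> v1 v2 v3 n23; have [? ? ? ? ?] := conic_frame_hyps.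
have [s1 ->] := vertex_param n1 v1; have [s2 ->] := vertex_param n2 v2.
have [s3 ->] := vertex_param n3 v3; rewrite {1}(conic_frame_base C U (X 1)) //.
apply: incident_meet_chords_inf;
  by rewrite ?tripv_conic_frame_neq0 ?invr_neq0 ?conic_kappa_neq0 ?vertex_par_inj.
Qed.

Let x k := par k.
Let y k := par (idxY N k).
Let v := par N.+1.

Lemma incident_pts_A j : (j.+1 < N)%N -> incident (pts N U V X Y j) L <->
  chords_meet a b c (x j.+1) (x j.+2) (y j.+1) (y j.+2) = 0.
Proof.
move=> lt_jN; rewrite /pts lt_jN /ptA.
rewrite -!(nth_polygon_X N U V X Y) -?(nth_polygon_Y N U V X Y); try lia.
by apply: incident_vertex_chords; rewrite /idxY; lia.
Qed.

Lemma incident_pts_B : incident (pts N U V X Y N.-1) L <->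
  chords_meet_inf a b c (x 1) (zpar x y N) v = 0.
Proof.
rewrite /pts ifF ?eqxx; last lia.
rewrite /ptB /linesB /zpar /= -[V](nth_polygon_V N U V X Y).
by case: ifP => _; rewrite -!(nth_polygon_X N U V X Y) -?(nth_polygon_Y N U V X Y);
  try apply: incident_vertex_chords_inf; rewrite /idxY; lia.
Qed.

Lemma incident_pts_C : incident (pts N U V X Y N) L <->
  chords_meet_inf a b c (y 1) (wpar x y N) v = 0.
Proof.
rewrite /pts !ifF; [|lia|lia].
rewrite /ptC /linesC /wpar /= -[V](nth_polygon_V N U V X Y).
by case: ifP => _; rewrite -!(nth_polygon_Y N U V X Y) -?(nth_polygon_X N U V X Y);
  try apply: incident_vertex_chords_inf; rewrite /idxY; lia.
Qed.

Lemma pts_incident_closure i : (i <= N)%N ->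
  (forall j, (j <= N)%N -> j != i -> incident (pts N U V X Y j) L) ->
  incident (pts N U V X Y i) L.
Proof.
have xy k : (0 < k <= N)%N -> x k != y k by move=> ?; apply: vertex_par_inj; rewrite /idxY; lia.
apply: (chain_closure N (fun j => diag_chords x y a b c j.+1 = 0)); first lia.
- exact: diag_chords1.
- move=> j lt_jN.
  apply: (two_of_three_iff (iff_refl _) (iff_refl _) (iff_sym (incident_pts_A j lt_jN))).
  by apply: diag_chords_step; apply: xy; lia.
rewrite prednK; last lia.
apply: (two_of_three_iff (iff_refl _) (iff_sym incident_pts_B) (iff_sym incident_pts_C)).
by apply: diag_chords_last; rewrite /zpar /wpar; case: odd;
  apply: vertex_par_inj; rewrite /idxY; lia.
Qed.

End InscribedPolygon.

Theorem theorem2 (R : numFieldType) (C : 'M[R]_3) (N : nat)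
    (U V : 'rV[R]_3) (X Y : nat -> 'rV[R]_3) :
  nondeg_conic C ->
  (2 <= N)%N ->
  (* the polygon U X_1 ... X_N V Y_N ... Y_1 is inscribed in C,
     with pairwise distinct vertices *)
  (forall P, P \in polygon N U V X Y -> P != 0 /\ on_conic C P) ->
  (forall i j, (i < j < size (polygon N U V X Y))%N ->
     pdistinct (nth 0 (polygon N U V X Y) i) (nth 0 (polygon N U V X Y) j)) ->
  general_position N U V X Y ->
  (* all points of A_1..A_{N-1},B,C except possibly the i-th are collinear *)
  (exists i, (i <= N)%N /\ exists L : 'rV[R]_3, L != 0 /\
     forall j, (j <= N)%N -> j != i -> incident (pts N U V X Y j) L) ->
  exists L : 'rV[R]_3, L != 0 /\
     forall j, (j <= N)%N -> incident (pts N U V X Y j) L.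
Proof.
move=> C_nondeg N_ge2 on_C distinct _ [i [le_iN [L [L_neq0 incL]]]].
exists L; split=> // j le_jN; have [-> | ne_ji] := eqVneq j i; last exact: incL.
exact: (pts_incident_closure _ _ _ _ _ _ _ C_nondeg N_ge2 on_C distinct _ le_iN incL).
Qed.
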